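(* Let $\mathcal{H}$ be a real Hilbert space, $A_i:\mathcal{H}\rightrightarrows\mathcal{H}$ and $B_i:\mathcal{H}\to\mathcal{H}$ operators for $i=1,\dots,N$, $W$ a mixing matrix, $\gamma_1,\dots,\gamma_N>0$, $\Gamma=\mathrm{diag}(\gamma_1,\dots,\gamma_N)$, $K=((I-W)/2)^{1/2}\succeq 0$, $c>\|\Gamma K^2\Gamma\|$, and $M=(cI-K\Gamma^2K)^{1/2}\succ0$. Define $A(\mathbf{x})=A_1(x_1)\times\dots\times A_N(x_N)$, $B(\mathbf{x})=(B_1(x_1),\dots,B_N(x_N))$ on $\mathcal{H}^N$, and define $\widetilde A,\widetilde C:\mathcal{H}^N\times\mathcal{H}^N\rightrightarrows\mathcal{H}^N\times\mathcal{H}^N$ and $\widetilde B:\mathcal{H}^N\times\mathcal{H}^N\to\mathcal{H}^N\times\mathcal{H}^N$ by $\widetilde A(\mathbf{z},\tilde{\mathbf{z}})=\big(\Gamma A(\Gamma\mathbf{z}),N_{\{0\}}(\tilde{\mathbf{z}})\big)$, $\widetilde B(\mathbf{z},\tilde{\mathbf{z}})=(\Gamma B(\Gamma\mathbf{z}),0)$, $\widetilde C(\mathbf{z},\tilde{\mathbf{z}})=\big(\Gamma K N_{\{0\}}(K\Gamma\mathbf{z}+M\tilde{\mathbf{z}}),\,M N_{\{0\}}(K\Gamma\mathbf{z}+M\tilde{\mathbf{z}})\big)$. Then: (i) $(\mathbf{a},\tilde{\mathbf{a}})\in\mathcal{H}^N\times\mathcal{H}^N$ satisfies $0\in(\widetilde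 A+\widetilde B+\widetilde C)(\mathbf{a},\tilde{\mathbf{a}})$ if and only if $\mathbf{a}=\Gamma^{-1}(z,\dots,z)$ for some $z\in\mathcal{H}$ with $0\in\sum_{i=1}^N(A_i+B_i)(z)$; (ii) if $A_1,\dots,A_N$ are maximally monotone and each $B_i$ is monotone and $L_i$-Lipschitz continuous, then $\widetilde A$ and $\widetilde C$ are maximally monotone and $\widetilde B$ is monotone and $L$-Lipschitz continuous with $L=\max_i\{\gamma_i^2L_i\}$.
   Context: Real $N\times N$ matrices act on $\mathcal{H}^N$ via Kronecker product with the identity of $\mathcal{H}$; square roots and definiteness refer to these (symmetric positive semidefinite) matrices. A mixing matrix for a connected graph $(\{1,\dots,N\},\mathcal{E})$ is $W=(w_{ij})\in\mathbb{R}^{N\times N}$ with $w_{ij}=0$ if $i\ne j$ and $(i,j)\notin\mathcal{E}$, $W=W^\top$, $\ker(I-W)=\mathbb{R}\mathbf{1}$, and $-I\prec W\preceq I$. $N_{\{0\}}$ denotes the normal cone of $\{0\}\subset\mathcal{H}^N$: $N_{\{0\}}(0)=\mathcal{H}^N$, $N_{\{0\}}(\mathbf{w})=\varnothing$ for $\mathbf{w}\ne0$. *)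

From HB Require Import structures.
From mathcomp Require Import all_boot all_order all_algebra.
From mathcomp Require Import all_classical all_reals all_analysis.
Set Implicit Arguments. Unset Strict Implicit. Unset Printing Implicit Defensive.
Import Order.TTheory GRing.Theory Num.Theory.
Import numFieldNormedType.Exports.
Local Open Scope classical_set_scope.
Local Open Scope ring_scope.

Definition is_inner_product (R : realType) (H : completeNormedModType R)
    (ip : H -> H -> R) : Prop :=
  [/\ forall x y, ip x y = ip y x,
      forall x y z, ip (x + y) z = ip x z + ip y z,
      forall (a : R) x y, ip (a *: x) y = a * ip x y &
      forall x, ip x x = `|x| ^+ 2].

Definition monotone_op (R : realType) (V : zmodType) (ip : V -> V -> R)
    (T : V -> set V) : Prop :=
  forall x y u v, T x u -> T y v -> 0 <= ip (x - y) (u - v).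

Definition maximally_monotone (R : realType) (V : zmodType) (ip : V -> V -> R)
    (T : V -> set V) : Prop :=
  monotone_op ip T /\
  forall T' : V -> set V, monotone_op ip T' ->
    (forall x, T x `<=` T' x) -> T' = T.

Definition monotone_fun (R : realType) (V : zmodType) (ip : V -> V -> R)
    (f : V -> V) : Prop :=
  forall x y, 0 <= ip (x - y) (f x - f y).

Definition lipschitz_fun (R : realType) (V : zmodType) (ip : V -> V -> R)
    (L : R) (f : V -> V) : Prop :=
  forall x y, Num.sqrt (ip (f x - f y) (f x - f y))
              <= L * Num.sqrt (ip (x - y) (x - y)).

Definition ipN (R : realType) (H : completeNormedModType R) (N : nat)
    (ip : H -> H -> R) (x y : {ffun 'I_N -> H}) : R :=
  \sum_i ip (x i) (y i).

Definition ipNN (R : realType) (H : completeNormedModType R) (N : nat)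
    (ip : H -> H -> R) (p q : {ffun 'I_N -> H} * {ffun 'I_N -> H}) : R :=
  ipN ip p.1 q.1 + ipN ip p.2 q.2.

(* a real N x N matrix acting on H^N (Kronecker product with Id_H) *)
Definition mxact (R : realType) (H : completeNormedModType R) (N : nat)
    (P : 'M[R]_N) (x : {ffun 'I_N -> H}) : {ffun 'I_N -> H} :=
  [ffun i => \sum_j P i j *: x j].

Definition N0 (V : zmodType) (w : V) : set V := [set _ | w = 0].

Definition mx_psd (R : realType) (N : nat) (P : 'M[R]_N) : Prop :=
  forall x : 'cV[R]_N, 0 <= (x^T *m P *m x) 0 0.

Definition mx_pd (R : realType) (N : nat) (P : 'M[R]_N) : Prop :=
  forall x : 'cV[R]_N, x != 0 -> 0 < (x^T *m P *m x) 0 0.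

Definition vnorm2 (R : realType) (N : nat) (x : 'cV[R]_N) : R :=
  Num.sqrt (\sum_i x i 0 ^+ 2).

Definition mx_opnorm (R : realType) (N : nat) (P : 'M[R]_N) : R :=
  sup [set vnorm2 (P *m x) | x in [set x : 'cV[R]_N | vnorm2 x <= 1]].

Definition connected_graph (N : nat) (E : rel 'I_N) : Prop :=
  symmetric E /\ forall i j, connect E i j.

Definition mixing_matrix (R : realType) (N : nat) (E : rel 'I_N)
    (W : 'M[R]_N) : Prop :=
  [/\ forall i j, i != j -> ~~ E i j -> W i j = 0,
      W^T = W,
      (forall x : 'cV[R]_N, (1%:M - W) *m x = 0 <-> exists t : R, x = const_mx t),
      mx_pd (W + 1%:M) &
      mx_psd (1%:M - W)].

Section Ops.
Variables (R : realType) (H : completeNormedModType R) (N : nat).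
Variables (A : 'I_N -> H -> set H) (B : 'I_N -> H -> H).
Variables (G K M : 'M[R]_N).

Definition Aprod (x : {ffun 'I_N -> H}) : set {ffun 'I_N -> H} :=
  [set y | forall i, A i (x i) (y i)].

Definition Bprod (x : {ffun 'I_N -> H}) : {ffun 'I_N -> H} :=
  [ffun i => B i (x i)].

Definition Atilde (p : {ffun 'I_N -> H} * {ffun 'I_N -> H})
    : set ({ffun 'I_N -> H} * {ffun 'I_N -> H}) :=
  [set q | ((mxact G) @` Aprod (mxact G p.1)) q.1 /\ N0 p.2 q.2].

Definition Btilde (p : {ffun 'I_N -> H} * {ffun 'I_N -> H})
    : {ffun 'I_N -> H} * {ffun 'I_N -> H} :=
  (mxact G (Bprod (mxact G p.1)), 0).

(* C~ = L^* o N_{0} o L with L(z, z~) = K G z + M z~ *)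
Definition Ctilde (p : {ffun 'I_N -> H} * {ffun 'I_N -> H})
    : set ({ffun 'I_N -> H} * {ffun 'I_N -> H}) :=
  [set (mxact (G *m K) v, mxact M v) | v in
      N0 (mxact (K *m G) p.1 + mxact M p.2)].

Definition ABCtilde (p : {ffun 'I_N -> H} * {ffun 'I_N -> H})
    : set ({ffun 'I_N -> H} * {ffun 'I_N -> H}) :=
  [set q | exists a c, Atilde p a /\ Ctilde p c /\ q = a + Btilde p + c].
End Ops.

(* For (i), the N0 components force the second block of a zero to vanish and
   K Gamma a = 0; since ker K consists of the constant vectors, Gamma a is
   constant, and the first block says that y + B(z, ..., z) lies in the range of
   K, which for a symmetric K with kernel the constants is exactly the set of
   vectors with zero sum.
   For (ii), a monotone operator is maximal iff it contains every point that is
   monotonically related to its graph.  This closure property passes to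
   coordinatewise products, to congruences x |-> P T(P x) by symmetric
   invertible P, and to products with N0, which gives A~.  C~ = L^* N0 L with
   L(z, z~) = K Gamma z + M z~ is the normal cone of ker L, and it is maximal
   because (ker L)^perp = range L^* when M is invertible.  Finally B~ acts
   coordinatewise as gamma_i B_i(gamma_i .), which is monotone and
   gamma_i^2 L_i-Lipschitz. *)

From HB Require Import structures.
From mathcomp Require Import all_boot all_order all_algebra.
From mathcomp Require Import all_classical all_reals all_analysis.
From mathcomp Require Import lra.
Import Order.TTheory GRing.Theory Num.Theory.
Import numFieldNormedType.Exports.
Local Open Scope classical_set_scope.
Local Open Scope ring_scope.
Set Implicit Arguments. Unset Strict Implicit. Unset Printing Implicit Defensive.

Definition inner_form (R : realType) (V : lmodType R) (f : V -> V -> R) : Prop :=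
  [/\ forall x y, f x y = f y x,
      forall x y z, f (x + y) z = f x z + f y z,
      forall (a : R) x y, f (a *: x) y = a * f x y,
      forall x, 0 <= f x x &
      forall x, f x x = 0 -> x = 0].

Definition prod_form (R : realType) (V U : lmodType R)
    (f : V -> V -> R) (g : U -> U -> R) (p q : V * U) : R :=
  f p.1 q.1 + g p.2 q.2.

Section InnerForm.
Variables (R : realType) (V : lmodType R) (f : V -> V -> R).
Hypothesis f_inner : inner_form f.

Lemma ipC x y : f x y = f y x. Proof. by case: f_inner. Qed.
Lemma ipDl x y z : f (x + y) z = f x z + f y z. Proof. by case: f_inner. Qed.
Lemma ipZl a x y : f (a *: x) y = a * f x y. Proof. by case: f_inner. Qed.
Lemma ip_ge0 x : 0 <= f x x. Proof. by case: f_inner. Qed.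
Lemma ip_eq0 x : f x x = 0 -> x = 0. Proof. by case: f_inner => _ _ _ _; apply. Qed.

Lemma ipDr x y z : f z (x + y) = f z x + f z y.
Proof. by rewrite ipC ipDl !(ipC z). Qed.
Lemma ipZr a x y : f y (a *: x) = a * f y x.
Proof. by rewrite ipC ipZl ipC. Qed.
Lemma ip0l y : f 0 y = 0.
Proof. by rewrite -(scale0r 0) ipZl mul0r. Qed.
Lemma ip0r y : f y 0 = 0.
Proof. by rewrite ipC ip0l. Qed.
Lemma ipNl x y : f (- x) y = - f x y.
Proof. by rewrite -scaleN1r ipZl mulN1r. Qed.
Lemma ipNr x y : f y (- x) = - f y x.
Proof. by rewrite ipC ipNl ipC. Qed.
Lemma ipBr x y z : f z (x - y) = f z x - f z y.
Proof. by rewrite ipDr ipNr. Qed.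
Lemma ipNlr x y : f (- x) (- y) = f x y.
Proof. by rewrite ipNl ipNr opprK. Qed.
Lemma ip_suml (I : finType) (F : I -> V) y :
  f (\sum_i F i) y = \sum_i f (F i) y.
Proof. by elim/big_ind2: _ => [|a b c d <- <-|//]; rewrite ?ip0l ?ipDl. Qed.
Lemma ip_sumr (I : finType) (F : I -> V) y :
  f y (\sum_i F i) = \sum_i f y (F i).
Proof. by rewrite ipC ip_suml; apply: eq_bigr => i _; rewrite ipC. Qed.

End InnerForm.

Lemma inner_form_ip (R : realType) (H : completeNormedModType R)
    (ip : H -> H -> R) : is_inner_product ip -> inner_form ip.
Proof.
case=> ipC ipD ipZ ipn; split=> // x; first by rewrite ipn exprn_ge0.
by rewrite ipn => /eqP; rewrite sqrf_eq0 normr_eq0 => /eqP.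
Qed.

Lemma inner_form_prod (R : realType) (V U : lmodType R)
    (f : V -> V -> R) (g : U -> U -> R) :
  inner_form f -> inner_form g -> inner_form (prod_form f g).
Proof.
move=> hf hg; split=> [p q|p q r|a p q|p|p].
- by rewrite /prod_form !(ipC hf p.1) (ipC hg p.2).
- by rewrite /prod_form !(ipDl hf, ipDl hg) addrACA.
- by rewrite /prod_form (ipZl hf) (ipZl hg) mulrDr.
- by rewrite addr_ge0 ?(ip_ge0 hf) ?(ip_ge0 hg).
move=> /eqP; rewrite paddr_eq0 ?(ip_ge0 hf) ?(ip_ge0 hg) //.
case/andP=> /eqP/(ip_eq0 hf) p1 /eqP/(ip_eq0 hg) p2.
by case: p p1 p2 => /= ? ? -> ->.
Qed.

Section ProductSpace.
Variables (R : realType) (H : completeNormedModType R) (N : nat).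
Variable ip : H -> H -> R.
Hypothesis ip_inner : inner_form ip.

Lemma inner_form_ipN : inner_form (ipN (N := N) ip).
Proof.
split=> [x y|x y z|a x y|x|x]; rewrite /ipN.
- by apply: eq_bigr => i _; rewrite (ipC ip_inner).
- by rewrite -big_split; apply: eq_bigr => i _; rewrite ffunE (ipDl ip_inner).
- by rewrite mulr_sumr; apply: eq_bigr => i _; rewrite ffunE (ipZl ip_inner).
- by apply: sumr_ge0 => i _; apply: (ip_ge0 ip_inner).
move=> x0; apply/ffunP => i; rewrite ffunE; apply: (ip_eq0 ip_inner).
by apply: (psumr_eq0P _ x0) => // j _; apply: (ip_ge0 ip_inner).
Qed.

Lemma inner_form_ipNN : inner_form (ipNN (N := N) ip).
Proof. exact: (inner_form_prod inner_form_ipN inner_form_ipN). Qed.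

End ProductSpace.

Definition monotone_saturated (R : realType) (V : zmodType) (f : V -> V -> R)
    (T : V -> set V) : Prop :=
  forall a b, (forall y v, T y v -> 0 <= f (a - y) (b - v)) -> T a b.

Section MaximalMonotone.
Variables (R : realType) (V : lmodType R) (f : V -> V -> R).
Hypothesis f_inner : inner_form f.

Lemma maximally_monotoneP (T : V -> set V) :
  maximally_monotone f T <-> monotone_op f T /\ monotone_saturated f T.
Proof.
split=> [[monoT maxT]|[monoT satT]]; last first.
  split=> // T' monoT' subT; apply: funext => x; apply/seteqP.
  split=> u; last exact: subT.
  by move=> T'xu; apply: satT => y v Tyv; apply: monoT' => //; apply: subT.
split=> // a b hab.
pose T' x := [set u | T x u \/ (x = a /\ u = b)].
have monoT' : monotone_op f T'.
  move=> x y u v [Txu|[-> ->]] [Tyv|[-> ->]].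
  - exact: monoT.
  - by rewrite -(ipNlr f_inner) !opprB; apply: hab.
  - exact: hab.
  - by rewrite !subrr (ip0l f_inner).
by rewrite -(maxT T' monoT' (fun x u => @or_introl _ _)); right.
Qed.

Lemma maximally_monotone_exists_le0 (T : V -> set V) a b :
  maximally_monotone f T -> exists y v, T y v /\ f (a - y) (b - v) <= 0.
Proof.
move=> /maximally_monotoneP[_ satT].
have [[y [v [Tyv lt0]]]|no_lt0] :=
  pselect (exists y v, T y v /\ f (a - y) (b - v) < 0).
  by exists y, v; split=> //; apply: ltW.
exists a, b; split; last by rewrite !subrr (ip0l f_inner).
apply: satT => y v Tyv; rewrite leNgt; apply/negP => lt0.
by apply: no_lt0; exists y, v.
Qed.

End MaximalMonotone.

Section NormalConeProduct.
Variables (R : realType) (V U : lmodType R) (f : V -> V -> R) (g : U -> U -> R).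
Hypotheses (f_inner : inner_form f) (g_inner : inner_form g).

Lemma maximally_monotone_N0 (T : V -> set V) : maximally_monotone f T ->
  maximally_monotone (prod_form f g)
    (fun p => [set q | T p.1 q.1 /\ N0 p.2 q.2]).
Proof.
move=> maxT; have /(maximally_monotoneP f_inner)[monoT satT] := maxT.
apply/(maximally_monotoneP (inner_form_prod f_inner g_inner)); split.
  move=> p p' q q' [Tq p2] [Tq' p2'].
  by rewrite /prod_form /= p2 p2' subrr (ip0l g_inner) addr0; apply: monoT.
move=> [a1 a2] [b1 b2] /= hab.
have a2_0 : a2 = 0.
  have [y [v [Tyv le0]]] := maximally_monotone_exists_le0 f_inner a1 b1 maxT.
  have := hab (y, 0) (v, b2 + a2) (conj Tyv erefl).
  rewrite /prod_form /= subr0 opprD addrA subrr add0r (ipNr g_inner) => h.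
  by apply: (ip_eq0 g_inner); apply/eqP; rewrite eq_le (ip_ge0 g_inner); lra.
split=> //=; apply: satT => y v Tyv.
have := hab (y, 0) (v, b2) (conj Tyv erefl).
by rewrite /prod_form /= a2_0 subrr (ip0l g_inner) addr0.
Qed.

End NormalConeProduct.

Section MatrixAction.
Variables (R : realType) (H : completeNormedModType R) (N : nat).
Implicit Types (P Q : 'M[R]_N) (x y : {ffun 'I_N -> H}).

Lemma mxact_is_linear P : linear (@mxact R H N P).
Proof.
move=> a x y; apply/ffunP => i; rewrite !ffunE scaler_sumr -big_split /=.
by apply: eq_bigr => j _; rewrite !ffunE scalerDr !scalerA mulrC.
Qed.

HB.instance Definition _ P :=
  GRing.isLinear.Build R {ffun 'I_N -> H} {ffun 'I_N -> H} _ (@mxact R H N P)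
    (mxact_is_linear P).

Lemma mxact0 P : mxact P 0 = 0 :> {ffun 'I_N -> H}.
Proof. exact: raddf0. Qed.
Lemma mxactN P : {morph @mxact R H N P : x / - x}.
Proof. exact: raddfN. Qed.
Lemma mxactD P : {morph @mxact R H N P : x y / x + y}.
Proof. exact: raddfD. Qed.
Lemma mxactB P : {morph @mxact R H N P : x y / x - y}.
Proof. exact: raddfB. Qed.

Lemma mxactM P Q x : mxact (P *m Q) x = mxact P (mxact Q x).
Proof.
apply/ffunP => i; rewrite !ffunE.
under eq_bigr => j _ do rewrite mxE scaler_suml.
rewrite exchange_big /=; apply: eq_bigr => k _.
by rewrite ffunE scaler_sumr; apply: eq_bigr => j _; rewrite scalerA.
Qed.

Lemma mxactDl P Q x : mxact (P + Q) x = mxact P x + mxact Q x.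
Proof.
apply/ffunP => i; rewrite !ffunE -big_split /=.
by apply: eq_bigr => j _; rewrite mxE scalerDl.
Qed.

Lemma mxactZl a P x : mxact (a *: P) x = a *: mxact P x.
Proof.
apply/ffunP => i; rewrite !ffunE scaler_sumr.
by apply: eq_bigr => j _; rewrite mxE scalerA.
Qed.

Lemma mxact_diag (d : 'rV[R]_N) x i : mxact (diag_mx d) x i = d 0 i *: x i.
Proof.
rewrite ffunE (bigD1 i) //= big1 ?addr0; first by rewrite mxE eqxx mulr1n.
by move=> j /negPf ji; rewrite mxE eq_sym ji mulr0n scale0r.
Qed.

Lemma mxact1 x : mxact 1%:M x = x.
Proof.
by apply/ffunP => i; rewrite -diag_const_mx mxact_diag mxE scale1r.
Qed.

Lemma mxactK P x : P \in unitmx -> mxact P (mxact (invmx P) x) = x.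
Proof. by move=> Pu; rewrite -mxactM mulmxV // mxact1. Qed.

Lemma mxactVK P x : P \in unitmx -> mxact (invmx P) (mxact P x) = x.
Proof. by move=> Pu; rewrite -mxactM mulVmx // mxact1. Qed.

Variable ip : H -> H -> R.
Hypothesis ip_inner : inner_form ip.

Lemma ipN_mxactl P x y : ipN ip (mxact P x) y = ipN ip x (mxact P^T y).
Proof.
rewrite /ipN; under eq_bigr => i _ do rewrite ffunE (ip_suml ip_inner).
rewrite exchange_big /=; apply: eq_bigr => j _.
rewrite ffunE (ip_sumr ip_inner); apply: eq_bigr => i _.
by rewrite (ipZl ip_inner) (ipZr ip_inner) mxE.
Qed.

Lemma ipN_mxactr P x y : ipN ip x (mxact P y) = ipN ip (mxact P^T x) y.
Proof. by rewrite ipN_mxactl trmxK. Qed.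

End MatrixAction.

Section ProductOperator.
Variables (R : realType) (H : completeNormedModType R) (N : nat).
Variable ip : H -> H -> R.
Hypothesis ip_inner : inner_form ip.
Let ipN_inner := inner_form_ipN N ip_inner.

Lemma maximally_monotone_Aprod (A : 'I_N -> H -> set H) :
  (forall i, maximally_monotone ip (A i)) -> maximally_monotone (ipN ip) (Aprod A).
Proof.
move=> maxA; apply/(maximally_monotoneP ipN_inner); split.
  move=> x y u v Axu Ayv; apply: sumr_ge0 => i _; rewrite !ffunE.
  exact: (maxA i).1 _ _ _ _ (Axu i) (Ayv i).
move=> a b hab.
have /fin_all_exists[w w_le0] i : exists yv : H * H,
    A i yv.1 yv.2 /\ ip (a i - yv.1) (b i - yv.2) <= 0.
  have [y [v []]] := maximally_monotone_exists_le0 ip_inner (a i) (b i) (maxA i).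
  by exists (y, v).
move=> i; apply: ((maximally_monotoneP ip_inner _).1 (maxA i)).2 => y v Ayv.
pose upd (z : H) (s : H * H -> H) := [ffun j => if j == i then z else s (w j)].
have Aupd : Aprod A (upd y fst) (upd v snd).
  by move=> j; rewrite !ffunE; case: eqP => [->|_] //; apply: (w_le0 j).1.
have : \sum_(j | j != i) ip ((a - upd y fst) j) ((b - upd v snd) j) <= 0.
  by apply: sumr_le0 => j /negPf ji; rewrite !ffunE ji; apply: (w_le0 j).2.
have := hab _ _ Aupd; rewrite /ipN (bigD1 i) //= !ffunE eqxx.
lra.
Qed.

Lemma maximally_monotone_congr (P : 'M[R]_N)
    (T : {ffun 'I_N -> H} -> set {ffun 'I_N -> H}) :
  P^T = P -> P \in unitmx -> maximally_monotone (ipN ip) T ->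
  maximally_monotone (ipN ip) (fun x => mxact P @` T (mxact P x)).
Proof.
move=> PT Pu /(maximally_monotoneP ipN_inner)[monoT satT].
apply/(maximally_monotoneP ipN_inner); split.
  move=> x y _ _ [u Tu <-] [v Tv <-].
  by rewrite -mxactB (ipN_mxactr ip_inner) PT mxactB; apply: monoT.
move=> a b hab; exists (mxact (invmx P) b); last exact: mxactK.
apply: satT => y v Tyv.
have := hab (mxact (invmx P) y) (mxact P v).
rewrite mxactK // => /(_ (imageP _ Tyv)).
rewrite -{1}(mxactVK a Pu) -mxactB (ipN_mxactl ip_inner) trmx_inv PT.
by rewrite mxactB mxactVK.
Qed.

End ProductOperator.

Section AdjointKernel.
Variables (R : realType) (H : completeNormedModType R) (N : nat).
Variable ip : H -> H -> R.
Hypothesis ip_inner : inner_form ip.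
Variables (P Q : 'M[R]_N).
Hypothesis Qu : Q \in unitmx.
Implicit Types (p q : {ffun 'I_N -> H} * {ffun 'I_N -> H}) (v : {ffun 'I_N -> H}).

Let L p := mxact P^T p.1 + mxact Q^T p.2.
Let Ladj v := (mxact P v, mxact Q v).

Let ipN_inner := inner_form_ipN N ip_inner.
Let ipNN_inner := inner_form_ipNN N ip_inner.

Let ipNN_adj p v : ipNN ip p (Ladj v) = ipN ip (L p) v.
Proof. by rewrite /ipNN !(ipN_mxactr ip_inner) (ipDl ipN_inner). Qed.

Let LD p q : L (p + q) = L p + L q.
Proof. by rewrite /L /= !mxactD addrACA. Qed.

Let LN p : L (- p) = - L p.
Proof. by rewrite /L /= !mxactN opprD. Qed.

Lemma orthogonal_kernel_range q :
  (forall d, L d = 0 -> ipNN ip d q = 0) -> exists v, q = Ladj v.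
Proof.
move=> orth; pose v := mxact (invmx Q) q.2; exists v.
set e := q.1 - mxact P v.
(* This kernel vector of L pairs with q to ipN ip e e. *)
have : ipNN ip (e, - mxact (invmx Q^T *m P^T) e) q = 0.
  apply: orth; rewrite /L /= mxactN -mxactM mulmxA mulmxV ?unitmx_tr //.
  by rewrite mul1mx subrr.
rewrite /ipNN /= (ipNl ipN_inner) ipN_mxactl // !trmx_mul trmxK trmx_inv trmxK.
rewrite mxactM -(ipBr ipN_inner) -/v -/e => /(ip_eq0 ipN_inner) /eqP.
by rewrite subr_eq0 => /eqP e1; rewrite /Ladj -e1 /v mxactK //; case: q {e e1 orth v}.
Qed.

Lemma maximally_monotone_adjoint_kernel :
  maximally_monotone (ipNN ip) (fun p => Ladj @` N0 (L p)).
Proof.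
apply/(maximally_monotoneP ipNN_inner); split.
  move=> p p' _ _ [v Lp0 <-] [v' Lp'0 <-].
  have -> : Ladj v - Ladj v' = Ladj (v - v') by rewrite /Ladj !mxactB.
  by rewrite ipNN_adj LD LN Lp0 Lp'0 subrr (ip0l ipN_inner).
move=> p q sat.
have Lp0 : L p = 0.
  have ge0 s : 0 <= ipNN ip p q - s * ipN ip (L p) (L p).
    have := sat 0 (Ladj (s *: L p)) (imageP _ _).
    rewrite subr0 (ipBr ipNN_inner) ipNN_adj (ipZr ipN_inner); apply.
    by rewrite /N0 /L /= !mxact0 addr0.
  apply: (ip_eq0 ipN_inner); apply/eqP; rewrite eq_le (ip_ge0 ipN_inner) andbT.
  rewrite leNgt; apply/negP => Lp_gt0.
  have := ge0 ((`|ipNN ip p q| + 1) / ipN ip (L p) (L p)).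
  by rewrite divfK ?gt_eqF //; have := ler_norm (ipNN ip p q); lra.
have [v ->] : exists v, q = Ladj v.
  apply: orthogonal_kernel_range => d Ld0.
  have sat0 y : L y = 0 -> 0 <= ipNN ip (p - y) q.
    have -> : q = q - Ladj 0 by rewrite /Ladj !mxact0 subr0.
    by move=> Ly0; apply: sat; exists 0.
  have := sat0 (p - d); have := sat0 (p + d).
  rewrite subKr opprD addrA subrr add0r (ipNl ipNN_inner).
  rewrite !LD LN Lp0 Ld0 oppr0 addr0.
  by move=> /(_ erefl) h1 /(_ erefl) h2; lra.
by exists v.
Qed.

End AdjointKernel.

Section SingleValuedOperator.
Variables (R : realType) (V : lmodType R) (f : V -> V -> R).
Hypothesis f_inner : inner_form f.
Implicit Type F : V -> V.

Lemma lipschitz_funP (L : R) F : 0 <= L ->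
  lipschitz_fun f L F <->
  forall x y, f (F x - F y) (F x - F y) <= L ^+ 2 * f (x - y) (x - y).
Proof.
move=> L0; have eqL x : L * Num.sqrt x = Num.sqrt (L ^+ 2 * x).
  by rewrite sqrtrM ?sqr_ge0 // sqrtr_sqr ger0_norm.
split=> lipF x y; have := lipF x y.
  by rewrite eqL ler_sqrt // mulr_ge0 ?sqr_ge0 ?(ip_ge0 f_inner).
by rewrite eqL ler_sqrt // mulr_ge0 ?sqr_ge0 ?(ip_ge0 f_inner).
Qed.

Lemma lipschitz_fun_le (L L' : R) F :
  L <= L' -> lipschitz_fun f L F -> lipschitz_fun f L' F.
Proof.
move=> LL' lipF x y; apply: (le_trans (lipF x y)).
by rewrite ler_wpM2r ?sqrtr_ge0.
Qed.

Lemma monotone_fun_conj (g : R) F :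
  monotone_fun f F -> monotone_fun f (fun x => g *: F (g *: x)).
Proof.
move=> monoF x y; rewrite -scalerBr (ipZr f_inner) -(ipZl f_inner) scalerBr.
exact: monoF.
Qed.

Lemma lipschitz_fun_conj (g L : R) F : 0 <= g ->
  lipschitz_fun f L F -> lipschitz_fun f (g ^+ 2 * L) (fun x => g *: F (g *: x)).
Proof.
have sqrtZ u : Num.sqrt (f (g *: u) (g *: u)) = `|g| * Num.sqrt (f u u).
  by rewrite (ipZl f_inner) (ipZr f_inner) mulrA -expr2 sqrtrM ?sqr_ge0 // sqrtr_sqr.
move=> g0 lipF x y; rewrite -!scalerBr !sqrtZ ger0_norm //.
have := lipF (g *: x) (g *: y); rewrite -scalerBr sqrtZ ger0_norm // => lip.
by rewrite expr2 -!mulrA ler_wpM2l // mulrCA.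
Qed.

End SingleValuedOperator.

Section PairWithZero.
Variables (R : realType) (V U : lmodType R) (f : V -> V -> R) (g : U -> U -> R).
Hypotheses (f_inner : inner_form f) (g_inner : inner_form g).
Variable F : V -> V.

Lemma monotone_fun_pair0 :
  monotone_fun f F -> monotone_fun (prod_form f g) (fun p => (F p.1, 0)).
Proof.
by move=> monoF p q; rewrite /prod_form /= subrr (ip0r g_inner) addr0.
Qed.

Lemma lipschitz_fun_pair0 (L : R) : 0 <= L ->
  lipschitz_fun f L F -> lipschitz_fun (prod_form f g) L (fun p => (F p.1, 0)).
Proof.
move=> L0 /(lipschitz_funP f_inner _ L0) lipF.
apply/(lipschitz_funP (inner_form_prod f_inner g_inner) _ L0) => p q.
rewrite /prod_form /= subrr (ip0r g_inner) addr0 mulrDr.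
by rewrite ler_wpDr ?mulr_ge0 ?sqr_ge0 ?(ip_ge0 g_inner).
Qed.

End PairWithZero.

Section ComponentwiseOperator.
Variables (R : realType) (H : completeNormedModType R) (N : nat).
Variable ip : H -> H -> R.
Hypothesis ip_inner : inner_form ip.
Variable F : 'I_N -> H -> H.

Lemma monotone_fun_Bprod :
  (forall i, monotone_fun ip (F i)) -> monotone_fun (ipN ip) (Bprod F).
Proof. by move=> monoF x y; apply: sumr_ge0 => i _; rewrite !ffunE; apply: monoF. Qed.

Lemma lipschitz_fun_Bprod (L : R) : 0 <= L ->
  (forall i, lipschitz_fun ip L (F i)) -> lipschitz_fun (ipN ip) L (Bprod F).
Proof.
move=> L0 lipF; apply/(lipschitz_funP (inner_form_ipN N ip_inner) _ L0) => x y.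
rewrite /ipN mulr_sumr; apply: ler_sum => i _; rewrite !ffunE.
exact: (lipschitz_funP ip_inner _ L0).1.
Qed.

Lemma diag_conj_Bprod (gamma : 'I_N -> R) x :
  mxact (diag_mx (\row_i gamma i)) (Bprod F (mxact (diag_mx (\row_i gamma i)) x)) =
  Bprod (fun i z => gamma i *: F i (gamma i *: z)) x.
Proof.
by apply/ffunP => i; rewrite mxact_diag [Bprod F _ _]ffunE mxact_diag ffunE mxE.
Qed.

End ComponentwiseOperator.

Section RealMatrix.
Variables (R : realFieldType) (N : nat).
Implicit Types (K S : 'M[R]_N) (x : 'cV[R]_N).

Lemma trmx_mulmx_eq0 m (A : 'M[R]_(m, N)) x : A^T *m A *m x = 0 -> A *m x = 0.
Proof.
move=> AAx0; set u := A *m x.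
have /matrixP/(_ 0 0) : u^T *m u = 0.
  by rewrite trmx_mul -mulmxA (mulmxA A^T) AAx0 mulmx0.
rewrite !mxE => /eqP; rewrite psumr_eq0 => [/allP u0|i _]; last first.
  by rewrite mxE -expr2 sqr_ge0.
apply/matrixP => i j; rewrite (ord1 j).
have := u0 i (mem_index_enum i); rewrite /= mxE -expr2 sqrf_eq0 => /eqP ->.
by rewrite mxE.
Qed.

Lemma ker_sqrt_mx K S (a : R) : K^T = K -> K *m K = a *: S -> a != 0 ->
  forall x, (K *m x == 0) = (S *m x == 0).
Proof.
move=> KT KKS a0 x; have Sx : S *m x = a^-1 *: (K *m (K *m x)).
  by rewrite mulmxA KKS -scalemxAl scalerA mulVf ?scale1r.
apply/eqP/eqP => [Kx0|]; first by rewrite Sx Kx0 mulmx0 scaler0.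
rewrite Sx => /eqP; rewrite scaler_eq0 invr_eq0 (negPf a0) /= -{1}KT mulmxA.
by move=> /eqP /trmx_mulmx_eq0.
Qed.

Definition centering_mx : 'M[R]_N := 1%:M - N%:R^-1 *: const_mx 1.

Lemma centering_mx_const (t : R) : centering_mx *m (const_mx t : 'cV_N) = 0.
Proof.
apply/matrixP => i j; have N0 : N%:R != 0 :> R.
  by rewrite pnatr_eq0 -lt0n (leq_ltn_trans _ (ltn_ord i)).
rewrite /centering_mx mulmxBl mul1mx -scalemxAl !mxE.
under eq_bigr => k _ do rewrite !mxE mul1r.
by rewrite sumr_const card_ord -(mulr_natr t) mulrC -mulrA mulfV // mulr1 subrr.
Qed.

Lemma trmx_centering : centering_mx^T = centering_mx.
Proof. by rewrite /centering_mx linearB /= trmx1 linearZ /= trmx_const. Qed.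

Variable K : 'M[R]_N.
Hypotheses (KT : K^T = K) (Kker : forall x, K *m x = 0 <-> exists t, x = const_mx t).

Lemma centering_mx_factor : exists K', K *m K' = centering_mx.
Proof.
(* centering_mx kills the columns of cokermx K: they lie in ker K, so are constant. *)
have sub : (centering_mx <= K)%MS.
  rewrite submxE; apply/eqP/matrixP => i j.
  have [t colj] : exists t, col j (cokermx K) = const_mx t.
    by apply/Kker; rewrite colE mulmxA mulmx_coker mul0mx.
  have := congr1 (fun X : 'cV[R]_N => X i 0) (centering_mx_const t).
  by rewrite -colj colE mulmxA -colE !mxE.
exists ((pinvmx K)^T *m centering_mx).
by have := congr1 trmx (mulmxKpV sub); rewrite !trmx_mul KT trmx_centering mulmxA.
Qed.

End RealMatrix.

Section ConstantKernel.
Variables (R : realType) (H : completeNormedModType R) (N : nat).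
Variable K : 'M[R]_N.
Hypotheses (KT : K^T = K)
  (Kker : forall x : 'cV[R]_N, K *m x = 0 <-> exists t, x = const_mx t).
Implicit Types (x s v : {ffun 'I_N -> H}).

Lemma mxact_centering x :
  mxact (centering_mx R N) x = x - [ffun => N%:R^-1 *: \sum_j x j].
Proof.
rewrite /centering_mx mxactDl mxact1 -scaleNr mxactZl scaleNr; congr (_ - _).
apply/ffunP => i; rewrite !ffunE; congr (_ *: _).
by apply: eq_bigr => j _; rewrite mxE scale1r.
Qed.

Lemma mx_row_sum_eq0 i : \sum_j K i j = 0.
Proof.
have /matrixP/(_ i 0) : K *m const_mx 1 = 0 :> 'cV_N by apply/Kker; exists 1.
by rewrite !mxE => Ki0; rewrite -[RHS]Ki0; apply: eq_bigr => j _; rewrite mxE mulr1.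
Qed.

Lemma mxact_const_eq0 (z : H) : mxact K [ffun => z] = 0.
Proof.
apply/ffunP => i; rewrite !ffunE; under eq_bigr => j _ do rewrite ffunE.
by rewrite -scaler_suml mx_row_sum_eq0 scale0r.
Qed.

Lemma sum_mxact_eq0 v : \sum_i mxact K v i = 0.
Proof.
under eq_bigr => i _ do rewrite ffunE.
rewrite exchange_big big1 // => j _; rewrite -scaler_suml.
have -> : \sum_i K i j = \sum_i K j i by apply: eq_bigr => i _; rewrite -{1}KT mxE.
by rewrite mx_row_sum_eq0 scale0r.
Qed.

Lemma mxact_onto_sum0 s : \sum_i s i = 0 -> exists v, mxact K v = s.
Proof.
move=> s0; have [K' KK'] := centering_mx_factor KT Kker; exists (mxact K' s).
rewrite -mxactM KK' mxact_centering s0.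
suff -> : [ffun => N%:R^-1 *: 0] = 0 :> {ffun 'I_N -> H} by rewrite subr0.
by apply/ffunP => i; rewrite !ffunE scaler0.
Qed.

Lemma mxact_eq0_const x : mxact K x = 0 -> exists z, x = [ffun => z].
Proof.
move=> Kx0; have [K' KK'] := centering_mx_factor KT Kker.
exists (N%:R^-1 *: \sum_j x j); apply/eqP; rewrite -subr_eq0 -mxact_centering.
by rewrite -trmx_centering -KK' trmx_mul KT mxactM Kx0 mxact0.
Qed.

End ConstantKernel.

Section ZerosOfABCtilde.
Variables (R : realType) (H : completeNormedModType R) (N : nat).
Variables (A : 'I_N -> H -> set H) (B : 'I_N -> H -> H) (G K M : 'M[R]_N).
Hypotheses (Gu : G \in unitmx) (KT : K^T = K)
  (Kker : forall x : 'cV[R]_N, K *m x = 0 <-> exists t, x = const_mx t).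

Lemma ABCtilde_zero a a2 :
  ABCtilde A B G K M (a, a2) 0 <->
  (a2 = 0 /\
   exists z : H, a = mxact (invmx G) [ffun => z] /\
     exists y : 'I_N -> H, (forall i, A i z (y i)) /\ \sum_i (y i + B i z) = 0).
Proof.
split.
  move=> [q [c [[[y Ay Gy] /= a20] [[v /= Lv0 <-] /(congr1 fst) /= sum0]]]].
  rewrite a20 mxact0 addr0 mxactM in Lv0.
  have [z Gaz] := mxact_eq0_const KT Kker Lv0.
  split=> //; exists z; split; first by rewrite -Gaz mxactVK.
  exists y; split=> [i|]; first by have := Ay i; rewrite Gaz ffunE.
  have : mxact G (y + Bprod B (mxact G a) + mxact K v) = 0.
    by rewrite !mxactD Gy -mxactM -sum0.
  move=> /(congr1 (mxact (invmx G))); rewrite mxactVK // mxact0.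
  move: (mxact K v) (sum_mxact_eq0 KT Kker v) => w w0.
  rewrite Gaz => /eqP; rewrite addr_eq0 => /eqP yBw.
  transitivity (- \sum_i w i); last by rewrite w0 oppr0.
  rewrite -sumrN; apply: eq_bigr => i _.
  by have := congr1 (fun x : {ffun 'I_N -> H} => x i) yBw; rewrite /= !ffunE.
move=> [-> [z [-> [y [Ay sum0]]]]].
pose y' : {ffun 'I_N -> H} := [ffun i => y i].
have [v Kv] : exists v, mxact K v = - (y' + Bprod B [ffun => z]).
  apply: (mxact_onto_sum0 KT Kker).
  transitivity (- \sum_i (y i + B i z)); last by rewrite sum0 oppr0.
  by rewrite -sumrN; apply: eq_bigr => i _; rewrite !ffunE.
exists (mxact G y', - mxact M v), (mxact (G *m K) v, mxact M v); split.
  by split=> //=; exists y' => [i|]; rewrite ?mxactK ?ffunE.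
split; first by exists v; rewrite // /N0 mxact0 addr0 mxactM mxactK // mxact_const_eq0.
apply: injective_projections => /=; last by rewrite addr0 addNr.
by rewrite mxactK // mxactM -!mxactD Kv subrr mxact0.
Qed.

End ZerosOfABCtilde.

Lemma mx_pd_unit (R : realType) (N : nat) (M : 'M[R]_N) : mx_pd M -> M \in unitmx.
Proof.
move=> Mpd; rewrite -row_free_unit -kermx_eq0; apply/rowV0P => v /sub_kermxP vM0.
apply/eqP/negP => /negP v0; have := Mpd v^T; rewrite trmx_eq0 => /(_ v0).
by rewrite trmxK vM0 mul0mx mxE ltxx.
Qed.

Lemma diag_mx_unit (R : realType) (N : nat) (gamma : 'I_N -> R) :
  (forall i, 0 < gamma i) -> diag_mx (\row_i gamma i) \in unitmx.
Proof.
move=> gamma_gt0; rewrite unitmxE det_diag unitfE; apply/prodf_neq0 => i _.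
by rewrite mxE gt_eqF.
Qed.

Theorem lemma3p3 (R : realType) (H : completeNormedModType R)
    (ip : H -> H -> R) (N : nat) (E : rel 'I_N) (W : 'M[R]_N)
    (A : 'I_N -> H -> set H) (B : 'I_N -> H -> H)
    (gamma : 'I_N -> R) (K M : 'M[R]_N) (c : R) :
  is_inner_product ip ->
  connected_graph E ->
  mixing_matrix E W ->
  (forall i, 0 < gamma i) ->
  let G := diag_mx (\row_i gamma i) in
  K^T = K -> mx_psd K -> K *m K = 2^-1 *: (1%:M - W) ->
  mx_opnorm (G *m K *m K *m G) < c ->
  M^T = M -> mx_pd M -> M *m M = c%:M - K *m G *m G *m K ->
  (* (i) *)
  (forall a a2 : {ffun 'I_N -> H},
     ABCtilde A B G K M (a, a2) 0 <->
     (a2 = 0 /\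
      exists z : H,
        a = mxact (invmx G) [ffun => z] /\
        exists y : 'I_N -> H,
          (forall i, A i z (y i)) /\ \sum_i (y i + B i z) = 0))
  /\
  (* (ii) *)
  (forall Lc : 'I_N -> R,
     (forall i, maximally_monotone ip (A i)) ->
     (forall i, monotone_fun ip (B i)) ->
     (forall i, lipschitz_fun ip (Lc i) (B i)) ->
     maximally_monotone (ipNN ip) (Atilde A G) /\
     maximally_monotone (ipNN ip) (Ctilde G K M) /\
     monotone_fun (ipNN ip) (Btilde B G) /\
     lipschitz_fun (ipNN ip) (\big[Num.max/0]_i (gamma i ^+ 2 * Lc i))
       (Btilde B G)).
Proof.
move=> /inner_form_ip ip_inner _ [_ _ kerW _ _] gamma_gt0 G KT _ KK _ MT Mpd _.
have ipN_inner := inner_form_ipN N ip_inner.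
have Gu : G \in unitmx by apply: diag_mx_unit.
have GT : G^T = G by apply: tr_diag_mx.
have Kker (x : 'cV[R]_N) : K *m x = 0 <-> exists t, x = const_mx t.
  have := ker_sqrt_mx KT KK _ x; rewrite invr_eq0 pnatr_eq0 => /(_ isT) kerK.
  by rewrite -kerW; split=> /eqP Kx0; apply/eqP; move: Kx0; rewrite kerK.
split=> [a a2|Lc maxA monoB lipB]; first exact: ABCtilde_zero.
have -> : Btilde B G =
    fun p => (Bprod (fun i z => gamma i *: B i (gamma i *: z)) p.1, 0).
  by apply: funext => p; rewrite /Btilde diag_conj_Bprod.
split; last split; last split.
- exact: (maximally_monotone_N0 ipN_inner ipN_inner
    (maximally_monotone_congr ip_inner GT Gu (maximally_monotone_Aprod ip_inner maxA))).
- have := maximally_monotone_adjoint_kernel ip_inner (G *m K) (mx_pd_unit Mpd).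
  by rewrite trmx_mul GT KT MT.
- apply: (monotone_fun_pair0 ipN_inner).
  by apply: monotone_fun_Bprod => i; apply: (monotone_fun_conj ip_inner).
have L0 : 0 <= \big[Num.max/0]_i (gamma i ^+ 2 * Lc i) by apply: bigmax_ge_id.
apply: (lipschitz_fun_pair0 ipN_inner ipN_inner L0).
apply: (lipschitz_fun_Bprod ip_inner L0) => i.
apply: (lipschitz_fun_le (le_bigmax _ _ i)).
exact: (lipschitz_fun_conj ip_inner (ltW (gamma_gt0 i)) (lipB i)).
Qed.
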